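(* Assume $S\neq\emptyset$, let $k\ge\max(1,k_1,\dots,k_m)$, and suppose $\mathcal{Q}_k(\tilde G)$ is closed in $\mathbb{R}[\tilde X]_{2k}$. Then the affine hyperplane $M=\{(1,x):x\in\mathbb{R}^n\}\subseteq\mathbb{R}^{n+1}$ intersects the relative interior of $\pi(\mathcal{Q}_k(\tilde G)^* )$.
   Context: $X=(X_1,\dots,X_n)$, $\tilde X=(X_0,X_1,\dots,X_n)$; $\mathbb{R}[\tilde X]_{2k}$ is the space of polynomials of degree at most $2k$. For $f\in\mathbb{R}[X]$ of degree $d$, its homogenization is $\tilde f(\tilde X)=X_0^df(X/X_0)$. Fix $g_1,\dots,g_m\in\mathbb{R}[X]$, $S=\{x\in\mathbb{R}^n:g_j(x)\ge0,\ j=1,\dots,m\}$, $k_j=\lceil\deg g_j/2\rceil$. For a finite set $H=\{h_1,\dots,h_r\}$ of polynomials, the $k$-th quadratic module is $\mathcal{Q}_k(H)=\{\sum_{j=0}^r\sigma_jh_j:h_0=1,\ \sigma_j\text{ sums of squares of polynomials},\ \deg(\sigma_jh_j)\le2k\}$. Let $\tilde G=\{\tilde g_1,\dots,\tilde g_m,X_0,\|\tilde X\|_2^2-1,1-\|\tilde X\|_2^2\}$. Identify linear functionals on $\mathbb{R}[\tilde X]_{2k}$ with sequences $y=(y_\alpha)_{\alpha\in\mathbb{N}^{n+1},|\alpha|\le2k}$ via the Riesz functional $L_y(\sum_\alpha q_\alpha\tilde X^\alpha)=\sum_\alpha q_\alpha y_\alpha$. The dual cone is $\mathcal{Q}_k(\tilde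 G)^*=\{y:L_y(p)\ge0\ \forall p\in\mathcal{Q}_k(\tilde G)\}$, and $\pi(y)=(L_y(X_0),L_y(X_1),\dots,L_y(X_n))\in\mathbb{R}^{n+1}$ is the projection onto the dual of the space of linear forms. *)

From mathcomp Require Import all_boot all_algebra.
From mathcomp Require Import mpoly.
From mathcomp Require Import all_classical all_reals topology normedtype.
Set Implicit Arguments. Unset Strict Implicit. Unset Printing Implicit Defensive.
Import GRing.Theory Num.Theory.
Local Open Scope ring_scope.
Import numFieldNormedType.Exports.
Local Open Scope classical_set_scope.

Section Defs.
Variable R : realType.

(* total degree of a polynomial (deg 0 := 0) *)
Definition mdegree {n} (p : {mpoly R[n]}) : nat := (msize p).-1.

Definition is_sos {n} (s : {mpoly R[n]}) : Prop :=
  exists qs : seq {mpoly R[n]}, s = \sum_(q <- qs) q ^+ 2.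

(* k-th quadratic module Q_k(H) with H = h_1..h_r given as a list, h_0 = 1 *)
Definition quadmod {n} (k : nat) (H : seq {mpoly R[n]}) : set {mpoly R[n]} :=
  [set p | exists sig : nat -> {mpoly R[n]},
     (forall j, (j <= size H)%N ->
        is_sos (sig j) /\ (mdegree (sig j * (1 :: H)`_j) <= 2 * k)%N) /\
     p = \sum_(j < (size H).+1) sig j * (1 :: H)`_j].

(* the monomial X^m in X_1..X_n viewed in X_0..X_n *)
Definition lift_mono {n} (m : 'X_{1..n}) : 'X_{1..n.+1} :=
  [multinom (if unlift ord0 i is Some j then m j else 0%N) | i < n.+1].

(* homogenization ~f = X_0^d f(X/X_0), d = deg f *)
Definition homogenize {n} (f : {mpoly R[n]}) : {mpoly R[n.+1]} :=
  \sum_(m <- msupp f)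
     f@_m *: ('X_ord0 ^+ (mdegree f - mdeg m) * 'X_[lift_mono m]).

Definition sqnorm_poly n : {mpoly R[n.+1]} := \sum_(i < n.+1) 'X_i ^+ 2.

Definition Gtilde {n} (g : seq {mpoly R[n]}) : seq {mpoly R[n.+1]} :=
  map homogenize g ++
  [:: 'X_ord0; sqnorm_poly n - 1; 1 - sqnorm_poly n].

Definition semialg {n} (g : seq {mpoly R[n]}) : set ('I_n -> R) :=
  [set x | forall j, (j < size g)%N -> 0 <= (g`_j).@[x]].

(* moment sequences y = (y_a)_{|a| <= 2k} and their Riesz functional *)
Definition mseq n k := 'X_{1..n.+1 < (2 * k).+1} -> R.

Definition riesz {n k} (y : mseq n k) (p : {mpoly R[n.+1]}) : R :=
  \sum_(a : 'X_{1..n.+1 < (2 * k).+1}) p@_a * y a.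

Definition dual_cone {n} k (C : set {mpoly R[n.+1]}) : set (mseq n k) :=
  [set y | forall p, C p -> 0 <= riesz y p].

(* projection onto the dual of linear forms *)
Definition proj_lin {n k} (y : mseq n k) : 'rV[R]_(n.+1) :=
  \row_(i < n.+1) riesz y 'X_i.

(* coordinates on R[~X]_{2k}: coefficient vectors w.r.t. the monomial basis *)
Definition poly_of_coefs n k
  (v : 'rV[R]_#|{: 'X_{1..n.+1 < (2 * k).+1}}|) : {mpoly R[n.+1]} :=
  \sum_(i < #|{: 'X_{1..n.+1 < (2 * k).+1}}|)
     v ord0 i *: 'X_[(enum_val i : 'X_{1..n.+1 < (2 * k).+1})].

Definition closed_in_deg n k (C : set {mpoly R[n.+1]}) : Prop :=
  closed [set v | C (@poly_of_coefs n k v)].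

Definition affine_hull {N} (P : set 'rV[R]_N) : set 'rV[R]_N :=
  [set z | exists (s : seq ('rV[R]_N * R)),
     (forall c, c \in s -> P c.1) /\ \sum_(c <- s) c.2 = 1 /\
     z = \sum_(c <- s) c.2 *: c.1].

Definition rel_interior {N} (P : set 'rV[R]_N) : set 'rV[R]_N :=
  [set x | P x /\ exists e : R, 0 < e /\
     (forall z, affine_hull P z -> ball x e z -> P z)].

End Defs.

Arguments dual_cone {R n} k C _.
Arguments closed_in_deg {R} n k C.
Arguments quadmod {R n} k H _.
Arguments proj_lin {R n k} y.
Arguments riesz {R n k} y p.

(* Take a in S and the unit vector v = (1, a) / |(1, a)|.  Every element of
   ~G is nonnegative at v: a homogenized g_j is a positive power of the scale
   times g_j(a), X_0(v) > 0 and |v| = 1.  Hence the moment sequence of the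
   Dirac measure at v lies in Q_k(~G)^* and its projection has first
   coordinate X_0(v) > 0.  The projection of the dual cone is a convex cone,
   and a convex cone P containing a point p with p_0 > 0 meets {x_0 = 1} in
   its relative interior: adding a large multiple of p to the sum of a
   spanning family of P gives a point x with x_0 > 0 around which, inside
   the span of P, every point is still a nonnegative combination of p and
   the family. *)

From mathcomp Require Import all_boot all_algebra.
From mathcomp Require Import mpoly.
From mathcomp Require Import all_classical all_reals topology normedtype.
From mathcomp Require Import order lra.
Set Implicit Arguments. Unset Strict Implicit.
Import Order.TTheory GRing.Theory Num.Theory.
Local Open Scope ring_scope.
Import numFieldNormedType.Exports.
Local Open Scope classical_set_scope.

Section FiniteDimensional.
Variable R : realType.
Variable N : nat.

Lemma scalar_rV_bounded (f : 'rV[R]_N -> R) : scalar f ->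
  exists2 K : R, 0 <= K & forall (v : 'rV[R]_N) (e : R),
    (forall j, `|v ord0 j| <= e) -> `|f v| <= K * e.
Proof.
move=> fL.
have lf a u w : f (a *: u + w) = a * f u + f w := fL a u w.
have f0 : f 0 = 0 by have := lf (-1) 0 0; rewrite scaler0 addr0 mulN1r addNr.
have fZ a u : f (a *: u) = a * f u by rewrite -[a *: u]addr0 lf f0 addr0.
have fD u w : f (u + w) = f u + f w by have := lf 1 u w; rewrite scale1r mul1r.
exists (\sum_(j < N) `|f (delta_mx 0 j)|); first exact: sumr_ge0.
move=> v e hv.
have -> : f v = \sum_(j < N) v 0 j * f (delta_mx 0 j).
  rewrite {1}(row_sum_delta v).
  by elim/big_rec2: _ => [|j y1 y2 _ <-]; rewrite ?f0 // fD fZ.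
rewrite mulr_suml (le_trans (ler_norm_sum _ _ _)) // ler_sum // => j _.
by rewrite normrM mulrC ler_wpM2l.
Qed.

Lemma exists_spanning_seq (P : set 'rV[R]_N) : exists2 s : seq 'rV[R]_N,
  (forall v, v \in s -> P v) & forall v, P v -> v \in <<s>>%VS.
Proof.
pose spans_dim (d : nat) :=
  `[< exists2 s, (forall v, v \in s -> P v) & \dim <<s>>%VS = d >].
have spans0 : spans_dim 0.
  by apply/asboolP; exists [::]; rewrite ?span_nil ?dimv0.
have spans_le d : spans_dim d -> (d <= \dim (fullv : {vspace 'rV[R]_N}))%N.
  by move=> /asboolP[s _ <-]; apply/dimvS/subvf.
have [d /asboolP[s sP <-] dmax] := ex_maxnP (ex_intro _ 0%N spans0) spans_le.
exists s => // v Pv.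
have s_le : (<<s>> <= <<v :: s>>)%VS by rewrite span_cons addvSr.
have : (\dim <<v :: s>> <= \dim <<s>>)%N.
  by apply/dmax/asboolP; exists (v :: s) => // w /predU1P[->|/sP].
rewrite (geq_leqif (dimv_leqif_eq s_le)) => /eqP ->.
by rewrite memv_span // mem_head.
Qed.

Lemma coord_le_near0 m (t : m.-tuple 'rV[R]_N) (e : R) : 0 < e ->
  exists2 d : R, 0 < d &
    forall v : 'rV[R]_N, (forall j, `|v ord0 j| <= d) ->
    forall i, `|coord t i v| <= e.
Proof.
move=> e0.
have /choice[K HK] i : exists K : R, 0 <= K /\ forall (v : 'rV[R]_N) (d : R),
    (forall j, `|v ord0 j| <= d) -> `|coord t i v| <= K * d.
  by have [K ? ?] := scalar_rV_bounded (linearP (coord t i)); exists K.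
pose KK := \sum_i K i + 1.
have KK0 : 0 < KK by rewrite ltr_wpDl // sumr_ge0 // => i _; case: (HK i).
exists (e / KK) => [|v hv i]; first exact: divr_gt0.
have [K0 Kb] := HK i.
apply: le_trans (Kb _ _ hv) _.
rewrite -[leRHS](divfK (lt0r_neq0 KK0)) mulrC ler_wpM2l ?divr_ge0 ?ltW //.
rewrite /KK (bigD1 i) //= -addrA ltrDl ltr_wpDl // sumr_ge0 // => j _.
by case: (HK j).
Qed.

Lemma cone_rel_interior_meets_hyperplane (P : set 'rV[R]_N) p (j0 : 'I_N) :
  (forall u w, P u -> P w -> P (u + w)) ->
  (forall (c : R) u, 0 <= c -> P u -> P (c *: u)) ->
  P p -> 0 < p ord0 j0 ->
  exists x : 'rV[R]_N, x ord0 j0 = 1 /\ rel_interior P x.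
Proof.
move=> PD PZ Pp p0.
have P0 : P 0 by rewrite -(scale0r p); apply: PZ.
have [s sP spanP] := exists_spanning_seq P.
pose t := in_tuple s.
pose S := \sum_(i < size s) s`_i.
(* The multiple of p is chosen so that (q + S) 0 j0 >= p 0 j0 > 0. *)
pose q := (1 + `|S 0 j0| / p 0 j0) *: p.
have Pq : P q.
  by apply: (PZ _ _ _ Pp); apply: addr_ge0 => //; exact: divr_ge0 (ltW p0).
pose c := ((q + S) 0 j0)^-1.
have c0 : 0 < c.
  rewrite invr_gt0 !mxE mulrDl mul1r divfK ?lt0r_neq0 //.
  by have := ler_norm (- S 0 j0); rewrite normrN; lra.
have Pnear (a : 'I_(size s) -> R) : (forall i, `|a i| <= c) ->
    P (c *: q + \sum_i (c + a i) *: s`_i).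
  move=> ac; apply: (PD); first exact: PZ (ltW c0) Pq.
  apply: (big_ind P P0 PD) => i _; apply: PZ; last exact/sP/mem_nth.
  by have := ac i; rewrite ler_norml => /andP[? _]; lra.
have xE : c *: (q + S) = c *: q + \sum_(i < size s) (c + 0) *: s`_i.
  rewrite scalerDr scaler_sumr; congr (_ + _).
  by apply: eq_bigr => i _; rewrite addr0.
have xS0 : 0 < (q + S) 0 j0 by rewrite -invr_gt0.
have [d d0 near_coord] := coord_le_near0 t c0.
exists (c *: (q + S)); split; first by rewrite mxE mulVf // lt0r_neq0.
split; first by rewrite xE; apply: Pnear => i; rewrite normr0 ltW.
exists d; split => // z [s' [s'P [_ zE]]] xz.
set x := c *: (q + S) in xE xz *.
have zx_span : z - x \in <<t>>%VS.
  apply: memvB.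
    rewrite zE big_seq; apply: memv_suml => u /s'P /spanP u_span.
    exact: memvZ.
  apply/memvZ/memvD; first exact: spanP.
  by apply: memv_suml => i _; rewrite memv_span ?mem_nth.
have -> : z = c *: q + \sum_i (c + coord t i (z - x)) *: s`_i.
  rewrite -{1}[z](subrK x) {1}(coord_span zx_span) [X in _ + X]xE.
  rewrite addrC -addrA.
  congr (_ + _); rewrite -big_split; apply: eq_bigr => i _.
  by rewrite addr0 scalerDl.
apply: Pnear => i; apply: near_coord => j.
by case: xz => _ /(_ ord0 j); rewrite /ball /= !mxE distrC => /ltW.
Qed.
End FiniteDimensional.

Section Riesz.
Variable R : realType.
Variables n k : nat.
Implicit Types (y : mseq R n k) (p q : {mpoly R[n.+1]}).

Lemma riesz0 y : riesz y 0 = 0.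
Proof. by rewrite /riesz big1 // => a _; rewrite mcoeff0 mul0r. Qed.

Lemma rieszD y : {morph riesz y : p q / p + q}.
Proof.
move=> p q; rewrite /riesz -big_split.
by apply: eq_bigr => a _; rewrite mcoeffD mulrDl.
Qed.

Lemma riesz_mseqD y1 y2 p :
  riesz (fun a => y1 a + y2 a) p = riesz y1 p + riesz y2 p.
Proof. by rewrite /riesz -big_split; apply: eq_bigr => a _; rewrite mulrDr. Qed.

Lemma riesz_mseqZ c y p : riesz (fun a => c * y a) p = c * riesz y p.
Proof. by rewrite /riesz mulr_sumr; apply: eq_bigr => a _; rewrite mulrCA. Qed.

Lemma proj_dual_coneD (C : set {mpoly R[n.+1]}) u w :
  (proj_lin @` dual_cone k C) u -> (proj_lin @` dual_cone k C) w ->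
  (proj_lin @` dual_cone k C) (u + w).
Proof.
move=> [y1 Cy1 <-] [y2 Cy2 <-]; exists (fun a => y1 a + y2 a).
  by move=> p Cp; rewrite riesz_mseqD addr_ge0 // ?Cy1 ?Cy2.
by apply/rowP => i; rewrite !mxE riesz_mseqD.
Qed.

Lemma proj_dual_coneZ (C : set {mpoly R[n.+1]}) (c : R) u : 0 <= c ->
  (proj_lin @` dual_cone k C) u -> (proj_lin @` dual_cone k C) (c *: u).
Proof.
move=> c0 [y Cy <-]; exists (fun a => c * y a).
  by move=> p Cp; rewrite riesz_mseqZ mulr_ge0 // Cy.
by apply/rowP => i; rewrite !mxE riesz_mseqZ.
Qed.

Definition dirac_mseq (v : 'I_n.+1 -> R) : mseq R n k :=
  fun a => ('X_[a : 'X_{1..n.+1}]).@[v].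

Lemma riesz_dirac v p : (msize p <= (2 * k).+1)%N ->
  riesz (dirac_mseq v) p = p.@[v].
Proof.
move=> size_p.
suff {2}<- :
    \sum_(a : 'X_{1..n.+1 < (2 * k).+1}) p@_a *: 'X_[a : 'X_{1..n.+1}] = p.
  by rewrite raddf_sum /riesz; apply: eq_bigr => a _; rewrite /= mevalZ.
apply/mpolyP => m; rewrite raddf_sum /=.
under eq_bigr => a _ do rewrite mcoeffZ mcoeffX.
have [m_lt|m_ge] := ltnP (mdeg m) (2 * k).+1.
  rewrite (bigD1 (BMultinom m_lt)) //= eqxx mulr1 big1 ?addr0 // => a.
  by rewrite bmeqP /= => /negbTE ->; rewrite mulr0.
rewrite big1 => [|a _]; last first.
  case: eqP => [am|]; rewrite ?mulr0 //.
  by have := bmdeg a; rewrite am ltnNge m_ge.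
by apply/esym/eqP; rewrite mcoeff_eq0 msize_mdeg_ge // (leq_trans size_p).
Qed.

Lemma dirac_mseq_dual_quadmod v (H : seq {mpoly R[n.+1]}) :
  (forall h, h \in H -> 0 <= h.@[v]) ->
  dual_cone k (quadmod k H) (dirac_mseq v).
Proof.
move=> H_ge0 p [sig [sig_ok ->]].
rewrite (big_morph _ (rieszD _) (riesz0 _)) sumr_ge0 // => j _.
have [[qs ->] deg_j] := sig_ok j (ltn_ord j).
rewrite riesz_dirac; last by rewrite (leq_trans (leqSpred _)).
rewrite mevalM mulr_ge0 //.
  by rewrite raddf_sum sumr_ge0 // => q _; rewrite /= rmorphXn sqr_ge0.
case: j {deg_j} => [[|j]] //= j_lt; first by rewrite meval1.
by apply/H_ge0/mem_nth.
Qed.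

End Riesz.

Section SphereLift.
Variable R : realType.
Variable n : nat.

Lemma lift_monoE (m : 'X_{1..n}) (i : 'I_n.+1) :
  lift_mono m i = (if unlift ord0 i is Some j then m j else 0)%N.
Proof. by rewrite /lift_mono mnmE. Qed.

Definition lift_point (a : 'I_n -> R) (i : 'I_n.+1) : R :=
  if unlift ord0 i is Some j then a j else 1.

Lemma meval_homogenize (a : 'I_n -> R) (r : R) (f : {mpoly R[n]}) :
  (homogenize f).@[fun i => r * lift_point a i] = r ^+ mdegree f * f.@[a].
Proof.
rewrite /homogenize raddf_sum /= mevalE big_distrr /= !big_seq.
apply: eq_bigr => m m_supp.
have deg_m : (mdeg m <= mdegree f)%N.
  by rewrite /mdegree -ltnS (leq_trans (msize_mdeg_lt m_supp)) // leqSpred.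
rewrite /= mevalZ mevalM rmorphXn /= mevalXU mevalX big_ord_recl.
rewrite lift_monoE unlift_none /lift_point unlift_none expr0 mul1r mulr1.
rewrite (eq_bigr (fun i => r ^+ m i * a i ^+ m i)) => [|i _]; last first.
  by rewrite lift_monoE liftK exprMn.
rewrite big_split /= prodrXr -mdegE.
rewrite -[in RHS](subnK deg_m) exprD.
by rewrite -mulrA mulrCA; congr (_ * _); exact: mulrCA.
Qed.

Definition sphere_lift (a : 'I_n -> R) (i : 'I_n.+1) : R :=
  (Num.sqrt (1 + \sum_(j < n) a j ^+ 2))^-1 * lift_point a i.

Lemma sphere_lift_ord0_gt0 (a : 'I_n -> R) : 0 < sphere_lift a ord0.
Proof.
rewrite /sphere_lift /lift_point unlift_none mulr1 invr_gt0 sqrtr_gt0.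
by rewrite ltr_wpDr // sumr_ge0 // => j _; rewrite sqr_ge0.
Qed.

Lemma meval_sqnorm_sphere_lift (a : 'I_n -> R) :
  (sqnorm_poly R n).@[sphere_lift a] = 1.
Proof.
have s_gt0 : 0 < 1 + \sum_(j < n) a j ^+ 2.
  by rewrite ltr_wpDr // sumr_ge0 // => j _; rewrite sqr_ge0.
rewrite /sqnorm_poly raddf_sum /=.
under eq_bigr do rewrite rmorphXn /= mevalXU /sphere_lift exprMn.
rewrite -mulr_sumr big_ord_recl /lift_point unlift_none expr1n.
rewrite [X in _ * (1 + X)](eq_bigr (fun j => a j ^+ 2)) => [|j _]; last first.
  by rewrite liftK.
by rewrite exprVn sqr_sqrtr ?ltW // mulVf //; exact: lt0r_neq0.
Qed.

Lemma Gtilde_ge0 (g : seq {mpoly R[n]}) (a : 'I_n -> R) : semialg g a ->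
  forall h, h \in Gtilde g -> 0 <= h.@[sphere_lift a].
Proof.
move=> ga h; rewrite mem_cat => /orP[/mapP[f f_g ->]|].
  rewrite meval_homogenize mulr_ge0 ?exprn_ge0 ?invr_ge0 ?sqrtr_ge0 //.
  by have := ga (index f g); rewrite index_mem nth_index //; apply.
rewrite !inE => /or3P[] /eqP->.
- by rewrite mevalXU ltW // sphere_lift_ord0_gt0.
- by rewrite mevalB meval_sqnorm_sphere_lift meval1 subrr.
- by rewrite mevalB meval_sqnorm_sphere_lift meval1 subrr.
Qed.
End SphereLift.

Theorem mainTheorem12 (R : realType) (n : nat) (g : seq {mpoly R[n]}) (k : nat) :
  semialg g !=set0 ->
  (1 <= k)%N ->
  (forall j, (j < size g)%N -> (uphalf (mdegree g`_j) <= k)%N) ->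
  closed_in_deg n k (quadmod k (Gtilde g)) ->
  exists x : 'rV[R]_(n.+1),
    x ord0 ord0 = 1 /\
    rel_interior (proj_lin @` dual_cone k (quadmod k (Gtilde g))) x.
Proof.
move=> [a ga] k_ge1 _ _.
have y_dual := dirac_mseq_dual_quadmod (k := k) (Gtilde_ge0 ga).
apply: cone_rel_interior_meets_hyperplane (ex_intro2 _ _ _ y_dual erefl) _.
- exact: proj_dual_coneD.
- exact: proj_dual_coneZ.
- rewrite mxE riesz_dirac ?mevalXU ?sphere_lift_ord0_gt0 // msizeX mdeg1 ltnS.
  by rewrite (leq_trans k_ge1) // leq_pmull.
Qed.
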